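(* Let $\mathcal{A}$ be an additive category, let $\mathcal{D}$ be a left weakly exact structure on $\mathcal{A}$ and let $I$ be a right weakly exact structure on $\mathcal{A}$. Then the class $\mathcal{W}$ of all kernel-cokernel pairs $A\xrightarrow{i}B\xrightarrow{d}C$ in $\mathcal{A}$ with $i\in I$ and $d\in\mathcal{D}$ is a weakly exact structure on $\mathcal{A}$.
   Context: Let $\mathcal{A}$ be an additive category. A kernel-cokernel pair (short exact sequence) is a pair of composable morphisms $A\xrightarrow{i}B\xrightarrow{d}C$ with $i$ a kernel of $d$ and $d$ a cokernel of $i$. A weakly exact structure on $\mathcal{A}$ is a class $\mathcal{W}$ of kernel-cokernel pairs, closed under isomorphisms of sequences and under finite direct sums of sequences, such that, calling $i$ an admissible monic (resp. $d$ an admissible epic) if $(i,d)\in\mathcal{W}$ for some $d$ (resp. some $i$): (E0) $1_A$ is an admissible monic for every object $A$; (E0)$^{op}$ $1_A$ is an admissible epic for every object $A$; (E2) for every admissible monic $i:A\to B$ and every morphism $t:A\to C$ the pushout of $i$ along $t$ exists and the resulting morphism $C\to S$ is an admissible monic; (E2)$^{op}$ for every admissible epic $h:A\to C$ and every morphism $t:B\to C$ the pullback of $h$ along $t$ exists and the resulting morphism $P\to B$ is an admissible epic. A right weakly exact structure on $\mathcal{A}$ is a class $I$ of morphisms that are kernels (of some morphism), closed under isomorphisms (of arrows), such that: (Id) for every object $X$, $1_X\in I$ and $0\to X$ is in $I$; (P) for every $f:X\to Y$ in $I$ and every morphism $h:X\to X'$ the pushout of $f$ along $h$ exists and the resulting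 morphism $f':X'\to Y'$ lies in $I$; (Q) if $A\xrightarrow{a}B\xrightarrow{b}C$ with $ba\in I$ and $a$ has a cokernel, then $a\in I$; (S) $I$ is closed under direct sums of morphisms. A left weakly exact structure is a class $\mathcal{D}$ of morphisms that are cokernels, closed under isomorphisms, satisfying the dual conditions: (Id$^{op}$) $1_X\in\mathcal{D}$ and $X\to 0$ is in $\mathcal{D}$ for all $X$; (P$^{op}$) pullbacks of morphisms in $\mathcal{D}$ along arbitrary morphisms exist and yield morphisms in $\mathcal{D}$; (Q$^{op}$) if $ba\in\mathcal{D}$ and $b$ has a kernel then $b\in\mathcal{D}$; (S$^{op}$) $\mathcal{D}$ is closed under direct sums of morphisms. *)

Set Implicit Arguments.
Unset Strict Implicit.

Record AddCat := {
  Obj :> Type;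
  Hom : Obj -> Obj -> Type;
  idm : forall X, Hom X X;
  comp : forall X Y Z, Hom Y Z -> Hom X Y -> Hom X Z;
  comp_assoc : forall X Y Z W (h : Hom Z W) (g : Hom Y Z) (f : Hom X Y),
      comp h (comp g f) = comp (comp h g) f;
  comp_id_l : forall X Y (f : Hom X Y), comp (idm Y) f = f;
  comp_id_r : forall X Y (f : Hom X Y), comp f (idm X) = f;
  zero : forall X Y, Hom X Y;
  add : forall X Y, Hom X Y -> Hom X Y -> Hom X Y;
  neg : forall X Y, Hom X Y -> Hom X Y;
  add_assoc : forall X Y (f g h : Hom X Y), add f (add g h) = add (add f g) h;
  add_comm : forall X Y (f g : Hom X Y), add f g = add g f;
  add_zero : forall X Y (f : Hom X Y), add f (zero X Y) = f;
  add_neg : forall X Y (f : Hom X Y), add f (neg f) = zero X Y;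
  comp_add_l : forall X Y Z (g g' : Hom Y Z) (f : Hom X Y),
      comp (add g g') f = add (comp g f) (comp g' f);
  comp_add_r : forall X Y Z (g : Hom Y Z) (f f' : Hom X Y),
      comp g (add f f') = add (comp g f) (comp g f');
  zobj : Obj;
  zobj_id : idm zobj = zero zobj zobj;
  bprod : Obj -> Obj -> Obj;
  bin1 : forall X Y, Hom X (bprod X Y);
  bin2 : forall X Y, Hom Y (bprod X Y);
  bpr1 : forall X Y, Hom (bprod X Y) X;
  bpr2 : forall X Y, Hom (bprod X Y) Y;
  bp11 : forall X Y, comp (bpr1 X Y) (bin1 X Y) = idm X;
  bp22 : forall X Y, comp (bpr2 X Y) (bin2 X Y) = idm Y;
  bp12 : forall X Y, comp (bpr1 X Y) (bin2 X Y) = zero Y X;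
  bp21 : forall X Y, comp (bpr2 X Y) (bin1 X Y) = zero X Y;
  bpsum : forall X Y, add (comp (bin1 X Y) (bpr1 X Y)) (comp (bin2 X Y) (bpr2 X Y))
                      = idm (bprod X Y)
}.

Arguments Hom : clear implicits.
Arguments idm {_} X.
Arguments comp {_ X Y Z} g f.
Arguments zero {_} X Y.
Arguments add {_ X Y} f g.
Arguments zobj {_}.
Arguments bprod {_} X Y.
Arguments bin1 {_} X Y.
Arguments bin2 {_} X Y.
Arguments bpr1 {_} X Y.
Arguments bpr2 {_} X Y.

Section Defs.
Context {C : AddCat}.

Definition is_iso {X Y : C} (f : Hom C X Y) : Prop :=
  exists g : Hom C Y X, comp g f = idm X /\ comp f g = idm Y.

Definition is_kernel {A B D : C} (i : Hom C A B) (d : Hom C B D) : Prop :=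
  comp d i = zero A D /\
  forall (W : C) (g : Hom C W B), comp d g = zero W D ->
    exists h : Hom C W A, comp i h = g /\
      forall h' : Hom C W A, comp i h' = g -> h' = h.

Definition is_cokernel {A B D : C} (d : Hom C B D) (i : Hom C A B) : Prop :=
  comp d i = zero A D /\
  forall (W : C) (g : Hom C B W), comp g i = zero A W ->
    exists h : Hom C D W, comp h d = g /\
      forall h' : Hom C D W, comp h' d = g -> h' = h.

Definition is_a_kernel {A B : C} (i : Hom C A B) : Prop :=
  exists (D : C) (d : Hom C B D), is_kernel i d.
Definition is_a_cokernel {B D : C} (d : Hom C B D) : Prop :=
  exists (A : C) (i : Hom C A B), is_cokernel d i.
Definition has_cokernel {A B : C} (a : Hom C A B) : Prop :=
  exists (D : C) (q : Hom C B D), is_cokernel q a.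
Definition has_kernel {B D : C} (b : Hom C B D) : Prop :=
  exists (A : C) (k : Hom C A B), is_kernel k b.

Definition kc_pair {A B D : C} (i : Hom C A B) (d : Hom C B D) : Prop :=
  is_kernel i d /\ is_cokernel d i.

Definition is_pushout {X Y X' P : C} (f : Hom C X Y) (h : Hom C X X')
    (f' : Hom C X' P) (h' : Hom C Y P) : Prop :=
  comp f' h = comp h' f /\
  forall (W : C) (u : Hom C X' W) (v : Hom C Y W), comp u h = comp v f ->
    exists w : Hom C P W, (comp w f' = u /\ comp w h' = v) /\
      forall w' : Hom C P W, comp w' f' = u /\ comp w' h' = v -> w' = w.

Definition is_pullback {Y Z Y' P : C} (g : Hom C Y Z) (t : Hom C Y' Z)
    (g' : Hom C P Y') (t' : Hom C P Y) : Prop :=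
  comp t g' = comp g t' /\
  forall (W : C) (u : Hom C W Y') (v : Hom C W Y), comp t u = comp g v ->
    exists w : Hom C W P, (comp g' w = u /\ comp t' w = v) /\
      forall w' : Hom C W P, comp g' w' = u /\ comp t' w' = v -> w' = w.

Definition dsum {X1 Y1 X2 Y2 : C} (f1 : Hom C X1 Y1) (f2 : Hom C X2 Y2)
  : Hom C (bprod X1 X2) (bprod Y1 Y2) :=
  add (comp (bin1 Y1 Y2) (comp f1 (bpr1 X1 X2)))
      (comp (bin2 Y1 Y2) (comp f2 (bpr2 X1 X2))).

Definition MorClass := forall X Y : C, Hom C X Y -> Prop.
Definition SeqClass := forall A B D : C, Hom C A B -> Hom C B D -> Prop.

Definition iso_arrows {X Y X' Y' : C} (f : Hom C X Y) (f' : Hom C X' Y') : Prop :=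
  exists (a : Hom C X X') (b : Hom C Y Y'),
    is_iso a /\ is_iso b /\ comp f' a = comp b f.

Definition iso_seqs {A B D A' B' D' : C} (i : Hom C A B) (d : Hom C B D)
    (i' : Hom C A' B') (d' : Hom C B' D') : Prop :=
  exists (a : Hom C A A') (b : Hom C B B') (c : Hom C D D'),
    is_iso a /\ is_iso b /\ is_iso c /\
    comp i' a = comp b i /\ comp d' b = comp c d.

Definition right_weakly_exact (I : MorClass) : Prop :=
  (forall X Y (f : Hom C X Y), I X Y f -> is_a_kernel f) /\
  (forall X Y X' Y' (f : Hom C X Y) (f' : Hom C X' Y'),
      I X Y f -> iso_arrows f f' -> I X' Y' f') /\
  (* (Id) *)
  (forall X : C, I X X (idm X)) /\
  (forall X : C, I zobj X (zero zobj X)) /\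
  (* (P) *)
  (forall X Y X' (f : Hom C X Y) (h : Hom C X X'), I X Y f ->
     exists (P : C) (f' : Hom C X' P) (h' : Hom C Y P),
       is_pushout f h f' h' /\ I X' P f') /\
  (* (Q) *)
  (forall A B D (a : Hom C A B) (b : Hom C B D),
      I A D (comp b a) -> has_cokernel a -> I A B a) /\
  (* (S) *)
  (forall X1 Y1 X2 Y2 (f1 : Hom C X1 Y1) (f2 : Hom C X2 Y2),
      I X1 Y1 f1 -> I X2 Y2 f2 -> I _ _ (dsum f1 f2)).

Definition left_weakly_exact (D : MorClass) : Prop :=
  (forall X Y (f : Hom C X Y), D X Y f -> is_a_cokernel f) /\
  (forall X Y X' Y' (f : Hom C X Y) (f' : Hom C X' Y'),
      D X Y f -> iso_arrows f f' -> D X' Y' f') /\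
  (* (Id^op) *)
  (forall X : C, D X X (idm X)) /\
  (forall X : C, D X zobj (zero X zobj)) /\
  (* (P^op) *)
  (forall Y Z Y' (g : Hom C Y Z) (t : Hom C Y' Z), D Y Z g ->
     exists (P : C) (g' : Hom C P Y') (t' : Hom C P Y),
       is_pullback g t g' t' /\ D P Y' g') /\
  (* (Q^op) *)
  (forall A B E (a : Hom C A B) (b : Hom C B E),
      D A E (comp b a) -> has_kernel b -> D B E b) /\
  (* (S^op) *)
  (forall X1 Y1 X2 Y2 (f1 : Hom C X1 Y1) (f2 : Hom C X2 Y2),
      D X1 Y1 f1 -> D X2 Y2 f2 -> D _ _ (dsum f1 f2)).

Definition adm_monic (W : SeqClass) {A B : C} (i : Hom C A B) : Prop :=
  exists (D : C) (d : Hom C B D), W A B D i d.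
Definition adm_epic (W : SeqClass) {B D : C} (d : Hom C B D) : Prop :=
  exists (A : C) (i : Hom C A B), W A B D i d.

Definition weakly_exact (W : SeqClass) : Prop :=
  (forall A B D (i : Hom C A B) (d : Hom C B D), W A B D i d -> kc_pair i d) /\
  (forall A B D A' B' D' (i : Hom C A B) (d : Hom C B D)
          (i' : Hom C A' B') (d' : Hom C B' D'),
      W A B D i d -> iso_seqs i d i' d' -> W A' B' D' i' d') /\
  (* closed under finite direct sums: empty sum and binary sums *)
  W zobj zobj zobj (zero zobj zobj) (zero zobj zobj) /\
  (forall A1 B1 D1 A2 B2 D2 (i1 : Hom C A1 B1) (d1 : Hom C B1 D1)
          (i2 : Hom C A2 B2) (d2 : Hom C B2 D2),
      W A1 B1 D1 i1 d1 -> W A2 B2 D2 i2 d2 ->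
      W _ _ _ (dsum i1 i2) (dsum d1 d2)) /\
  (* (E0) and (E0^op) *)
  (forall A : C, adm_monic W (idm A)) /\
  (forall A : C, adm_epic W (idm A)) /\
  (* (E2) *)
  (forall A B X (i : Hom C A B) (t : Hom C A X), adm_monic W i ->
     exists (S : C) (i' : Hom C X S) (t' : Hom C B S),
       is_pushout i t i' t' /\ adm_monic W i') /\
  (* (E2^op) *)
  (forall A X B (h : Hom C A X) (t : Hom C B X), adm_epic W h ->
     exists (P : C) (h' : Hom C P B) (t' : Hom C P A),
       is_pullback h t h' t' /\ adm_epic W h').

End Defs.


(** The heart of the argument is
   [pushout_kc_pair]: pushing a kernel-cokernel pair [(i, d)] out along [t]
   yields a kernel-cokernel pair [(i', d')] with [d' t' = d], provided [i'] is a
   kernel.  Axiom (P) of [I] makes [i'] a kernel lying in [I], and axiom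
   (Q^op) of [D] puts [d'] in [D] since [d' t' = d ∈ D]; this is (E2).  Axiom
   (E2^op) is the same statement in the opposite category, where the roles of
   [I] and [D] are exchanged. *)

Definition opCat (C : AddCat) : AddCat.
refine {| Obj := Obj C; Hom := fun X Y => Hom C Y X; idm := fun X => idm X;
  comp := fun X Y Z g f => comp f g; zero := fun X Y => zero Y X;
  add := fun X Y f g => add f g; neg := fun X Y f => @neg C Y X f; zobj := zobj;
  bprod := fun X Y => bprod X Y; bin1 := fun X Y => bpr1 X Y; bin2 := fun X Y => bpr2 X Y;
  bpr1 := fun X Y => bin1 X Y; bpr2 := fun X Y => bin2 X Y |}.
- intros; symmetry; apply comp_assoc.
- intros; apply comp_id_r.
- intros; apply comp_id_l.
- intros; apply add_assoc.
- intros; apply add_comm.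
- intros; apply add_zero.
- intros; apply add_neg.
- intros; apply comp_add_r.
- intros; apply comp_add_l.
- apply zobj_id.
- intros; apply bp11.
- intros; apply bp22.
- intros; apply bp21.
- intros; apply bp12.
- intros; apply bpsum.
Defined.

Lemma add_zero_l {C : AddCat} {X Y : C} (f : Hom C X Y) : add (zero X Y) f = f.
Proof. rewrite add_comm; apply add_zero. Qed.

Lemma add_idempotent_zero {C : AddCat} {X Y : C} (x : Hom C X Y) :
  add x x = x -> x = zero X Y.
Proof.
  intros Hxx.
  assert (H : add (add x x) (neg x) = add x (neg x)) by (rewrite Hxx; reflexivity).
  rewrite <- add_assoc, add_neg, add_zero in H. exact H.
Qed.

Lemma comp_zero_l {C : AddCat} {X Y Z : C} (f : Hom C X Y) :
  comp (zero Y Z) f = zero X Z.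
Proof. apply add_idempotent_zero. rewrite <- comp_add_l, add_zero. reflexivity. Qed.

Lemma comp_zero_r {C : AddCat} {X Y Z : C} (g : Hom C Y Z) :
  comp g (zero X Y) = zero X Z.
Proof. apply add_idempotent_zero. rewrite <- comp_add_r, add_zero. reflexivity. Qed.

Lemma from_zobj {C : AddCat} {X : C} (f : Hom C zobj X) : f = zero zobj X.
Proof. rewrite <- (comp_id_r f), zobj_id. apply comp_zero_r. Qed.

Lemma id_kernel_of_zero {C : AddCat} (A : C) : is_kernel (idm A) (zero A zobj).
Proof.
  split; [apply comp_id_r|].
  intros W g _. exists g. split; [apply comp_id_l|].
  intros h' Hh'. rewrite comp_id_l in Hh'. exact Hh'.
Qed.

Lemma zero_cokernel_of_id {C : AddCat} (A : C) : is_cokernel (zero A zobj) (idm A).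
Proof.
  split; [apply comp_id_r|].
  intros W g Hg. rewrite comp_id_r in Hg. subst g.
  exists (zero zobj W). split; [apply comp_zero_l|].
  intros h' _. apply from_zobj.
Qed.

Lemma id_cokernel_of_zero {C : AddCat} (A : C) : is_cokernel (idm A) (zero zobj A).
Proof. exact (@id_kernel_of_zero (opCat C) A). Qed.

Lemma zero_kernel_of_id {C : AddCat} (A : C) : is_kernel (zero zobj A) (idm A).
Proof. exact (@zero_cokernel_of_id (opCat C) A). Qed.

Lemma kernel_of_its_cokernel {C : AddCat} {A B E : C} {i : Hom C A B} {d : Hom C B E} :
  is_a_kernel i -> is_cokernel d i -> is_kernel i d.
Proof.
  intros (F & e & Hei & Hkernel) [Hdi Hcokernel].
  split; [exact Hdi|].
  intros W g Hdg.
  destruct (Hcokernel F e Hei) as (e' & He & _).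
  apply Hkernel. rewrite <- He, <- comp_assoc, Hdg. apply comp_zero_r.
Qed.

Lemma iso_square_inv {C : AddCat} {X Y X' Y' : C} (f : Hom C X Y) (f' : Hom C X' Y')
  (a : Hom C X X') (a' : Hom C X' X) (b : Hom C Y Y') (b' : Hom C Y' Y) :
  comp a a' = idm X' -> comp b' b = idm Y ->
  comp f' a = comp b f -> comp b' f' = comp f a'.
Proof.
  intros Haa' Hb'b Hsq.
  rewrite <- (comp_id_r (comp b' f')), <- Haa', (comp_assoc _ a), <- (comp_assoc b' f'),
    Hsq, (comp_assoc b' b), Hb'b, comp_id_l.
  reflexivity.
Qed.

Lemma kernel_iso {C : AddCat} {A B E A' B' E' : C} {i : Hom C A B} {d : Hom C B E}
  {i' : Hom C A' B'} {d' : Hom C B' E'} :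
  iso_seqs i d i' d' -> is_kernel i d -> is_kernel i' d'.
Proof.
  intros (a & b & c & [a' [Ha'a Haa']] & [b' [Hb'b Hbb']] & [c' [Hc'c Hcc']] & Hi & Hd)
    [Hdi Huniv].
  assert (Hi_inv : comp b' i' = comp i a') by exact (iso_square_inv i i' a a' b b' Haa' Hb'b Hi).
  assert (Hd_inv : comp c' d' = comp d b') by exact (iso_square_inv d d' b b' c c' Hbb' Hc'c Hd).
  split.
  - rewrite <- (comp_id_r (comp d' i')), <- Haa', (comp_assoc _ a), <- (comp_assoc d' i'),
      Hi, (comp_assoc d' b), Hd, <- (comp_assoc c d i), Hdi,
      comp_zero_r, comp_zero_l.
    reflexivity.
  - intros W g Hd'g.
    assert (Hz : comp d (comp b' g) = zero W E).
    { rewrite comp_assoc, <- Hd_inv, <- comp_assoc, Hd'g. apply comp_zero_r. }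
    destruct (Huniv W _ Hz) as [h [Hih Hunique]].
    exists (comp a h). split.
    + rewrite comp_assoc, Hi, <- comp_assoc, Hih, comp_assoc, Hbb'. apply comp_id_l.
    + intros k Hk.
      assert (Hik : comp i (comp a' k) = comp b' g)
        by (rewrite comp_assoc, <- Hi_inv, <- comp_assoc, Hk; reflexivity).
      rewrite <- (Hunique _ Hik), comp_assoc, Haa'. symmetry; apply comp_id_l.
Qed.

Lemma iso_seqs_op {C : AddCat} {A B E A' B' E' : C} {i : Hom C A B} {d : Hom C B E}
  {i' : Hom C A' B'} {d' : Hom C B' E'} :
  iso_seqs i d i' d' -> @iso_seqs (opCat C) E B A E' B' A' d i d' i'.
Proof.
  intros (a & b & c & [a' [Ha'a Haa']] & [b' [Hb'b Hbb']] & [c' [Hc'c Hcc']] & Hi & Hd).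
  exists c', b', a'. repeat split.
  - exists c; split; assumption.
  - exists b; split; assumption.
  - exists a; split; assumption.
  - exact (iso_square_inv d d' b b' c c' Hbb' Hc'c Hd).
  - exact (iso_square_inv i i' a a' b b' Haa' Hb'b Hi).
Qed.

Lemma cokernel_iso {C : AddCat} {A B E A' B' E' : C} {i : Hom C A B} {d : Hom C B E}
  {i' : Hom C A' B'} {d' : Hom C B' E'} :
  iso_seqs i d i' d' -> is_cokernel d i -> is_cokernel d' i'.
Proof. intros Hiso. exact (@kernel_iso (opCat C) _ _ _ _ _ _ d i d' i' (iso_seqs_op Hiso)). Qed.

Lemma kc_pair_iso {C : AddCat} {A B E A' B' E' : C} {i : Hom C A B} {d : Hom C B E}
  {i' : Hom C A' B'} {d' : Hom C B' E'} :
  iso_seqs i d i' d' -> kc_pair i d -> kc_pair i' d'.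
Proof.
  intros Hiso [Hker Hcoker].
  split; [exact (kernel_iso Hiso Hker) | exact (cokernel_iso Hiso Hcoker)].
Qed.

Lemma iso_seqs_arrows {C : AddCat} {A B E A' B' E' : C} {i : Hom C A B} {d : Hom C B E}
  {i' : Hom C A' B'} {d' : Hom C B' E'} :
  iso_seqs i d i' d' -> iso_arrows i i' /\ iso_arrows d d'.
Proof.
  intros (a & b & c & Ha & Hb & Hc & Hi & Hd).
  split; [exists a, b | exists b, c]; auto.
Qed.

Definition pairm {C : AddCat} {W X Y : C} (h1 : Hom C W X) (h2 : Hom C W Y)
  : Hom C W (bprod X Y) :=
  add (comp (bin1 X Y) h1) (comp (bin2 X Y) h2).

Lemma pr1_pair {C : AddCat} {W X Y : C} (h1 : Hom C W X) (h2 : Hom C W Y) :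
  comp (bpr1 X Y) (pairm h1 h2) = h1.
Proof.
  unfold pairm. rewrite comp_add_r, !comp_assoc, bp11, bp12, comp_id_l, comp_zero_l, add_zero.
  reflexivity.
Qed.

Lemma pr2_pair {C : AddCat} {W X Y : C} (h1 : Hom C W X) (h2 : Hom C W Y) :
  comp (bpr2 X Y) (pairm h1 h2) = h2.
Proof.
  unfold pairm. rewrite comp_add_r, !comp_assoc, bp21, bp22, comp_id_l, comp_zero_l, add_zero_l.
  reflexivity.
Qed.

Lemma bprod_ext {C : AddCat} {W X Y : C} (x y : Hom C W (bprod X Y)) :
  comp (bpr1 X Y) x = comp (bpr1 X Y) y -> comp (bpr2 X Y) x = comp (bpr2 X Y) y -> x = y.
Proof.
  intros H1 H2. rewrite <- (comp_id_l x), <- (comp_id_l y), <- bpsum, !comp_add_l,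
    <- !comp_assoc, H1, H2. reflexivity.
Qed.

Lemma pr1_dsum {C : AddCat} {X1 Y1 X2 Y2 : C} (f1 : Hom C X1 Y1) (f2 : Hom C X2 Y2) :
  comp (bpr1 Y1 Y2) (dsum f1 f2) = comp f1 (bpr1 X1 X2).
Proof. apply pr1_pair. Qed.

Lemma pr2_dsum {C : AddCat} {X1 Y1 X2 Y2 : C} (f1 : Hom C X1 Y1) (f2 : Hom C X2 Y2) :
  comp (bpr2 Y1 Y2) (dsum f1 f2) = comp f2 (bpr2 X1 X2).
Proof. apply pr2_pair. Qed.

Lemma dsum_kernel {C : AddCat} {A1 B1 E1 A2 B2 E2 : C} (i1 : Hom C A1 B1) (d1 : Hom C B1 E1)
  (i2 : Hom C A2 B2) (d2 : Hom C B2 E2) :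
  is_kernel i1 d1 -> is_kernel i2 d2 -> is_kernel (dsum i1 i2) (dsum d1 d2).
Proof.
  intros [Hd1i1 Huniv1] [Hd2i2 Huniv2]. split.
  - apply bprod_ext.
    + rewrite comp_assoc, pr1_dsum, <- comp_assoc, pr1_dsum, comp_assoc, Hd1i1,
        comp_zero_l, comp_zero_r.
      reflexivity.
    + rewrite comp_assoc, pr2_dsum, <- comp_assoc, pr2_dsum, comp_assoc, Hd2i2,
        comp_zero_l, comp_zero_r.
      reflexivity.
  - intros W g Hg.
    assert (Hg1 : comp d1 (comp (bpr1 B1 B2) g) = zero W E1).
    { rewrite comp_assoc, <- (pr1_dsum d1 d2), <- comp_assoc, Hg. apply comp_zero_r. }
    assert (Hg2 : comp d2 (comp (bpr2 B1 B2) g) = zero W E2).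
    { rewrite comp_assoc, <- (pr2_dsum d1 d2), <- comp_assoc, Hg. apply comp_zero_r. }
    destruct (Huniv1 W _ Hg1) as [h1 [Hh1 Hunique1]].
    destruct (Huniv2 W _ Hg2) as [h2 [Hh2 Hunique2]].
    exists (pairm h1 h2). split.
    + apply bprod_ext.
      * rewrite comp_assoc, pr1_dsum, <- comp_assoc, pr1_pair. exact Hh1.
      * rewrite comp_assoc, pr2_dsum, <- comp_assoc, pr2_pair. exact Hh2.
    + intros k Hk. apply bprod_ext.
      * rewrite pr1_pair. apply Hunique1.
        rewrite <- Hk, (comp_assoc (bpr1 _ _)), pr1_dsum, comp_assoc. reflexivity.
      * rewrite pr2_pair. apply Hunique2.
        rewrite <- Hk, (comp_assoc (bpr2 _ _)), pr2_dsum, comp_assoc. reflexivity.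
Qed.

Lemma dsum_op {C : AddCat} {X1 Y1 X2 Y2 : C} (f1 : Hom C Y1 X1) (f2 : Hom C Y2 X2) :
  @dsum (opCat C) X1 Y1 X2 Y2 f1 f2 = dsum f1 f2.
Proof. unfold dsum, pairm; simpl. rewrite <- !comp_assoc. reflexivity. Qed.

Lemma dsum_cokernel {C : AddCat} {A1 B1 E1 A2 B2 E2 : C} (i1 : Hom C A1 B1) (d1 : Hom C B1 E1)
  (i2 : Hom C A2 B2) (d2 : Hom C B2 E2) :
  is_cokernel d1 i1 -> is_cokernel d2 i2 -> is_cokernel (dsum d1 d2) (dsum i1 i2).
Proof.
  intros H1 H2.
  pose proof (@dsum_kernel (opCat C) _ _ _ _ _ _ d1 i1 d2 i2 H1 H2) as Hop.
  change (@is_cokernel C _ _ _ (@dsum (opCat C) _ _ _ _ d1 d2) (@dsum (opCat C) _ _ _ _ i1 i2)) in Hop.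
  rewrite !dsum_op in Hop. exact Hop.
Qed.

Lemma kc_pair_dsum {C : AddCat} {A1 B1 E1 A2 B2 E2 : C} {i1 : Hom C A1 B1} {d1 : Hom C B1 E1}
  {i2 : Hom C A2 B2} {d2 : Hom C B2 E2} :
  kc_pair i1 d1 -> kc_pair i2 d2 -> kc_pair (dsum i1 i2) (dsum d1 d2).
Proof.
  intros [Hk1 Hc1] [Hk2 Hc2].
  split; [apply dsum_kernel | apply dsum_cokernel]; assumption.
Qed.

Lemma pushout_ext {C : AddCat} {X Y X' P W : C} {f : Hom C X Y} {h : Hom C X X'}
  {f' : Hom C X' P} {h' : Hom C Y P} (w1 w2 : Hom C P W) :
  is_pushout f h f' h' -> comp w1 f' = comp w2 f' -> comp w1 h' = comp w2 h' -> w1 = w2.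
Proof.
  intros [Hsq Huniv] Hf' Hh'.
  assert (Hcompat : comp (comp w2 f') h = comp (comp w2 h') f)
    by (rewrite <- !comp_assoc, Hsq; reflexivity).
  destruct (Huniv W _ _ Hcompat) as (w & _ & Hunique).
  rewrite (Hunique w1 (conj Hf' Hh')), (Hunique w2 (conj eq_refl eq_refl)).
  reflexivity.
Qed.

(** Pushing out along [t] preserves cokernels: if [d] is a cokernel of [i],
    the map [d'] induced by [(0, d)] on the pushout is a cokernel of [i']. *)
Lemma pushout_cokernel {C : AddCat} {A B X S E : C} {i : Hom C A B} {t : Hom C A X}
  {i' : Hom C X S} {t' : Hom C B S} {d : Hom C B E} :
  is_pushout i t i' t' -> is_cokernel d i ->
  exists d' : Hom C S E, comp d' t' = d /\ is_cokernel d' i'.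
Proof.
  intros Hpo [Hdi Hcoker].
  pose proof Hpo as [Hsq Huniv].
  assert (Hcompat : comp (zero X E) t = comp d i) by (rewrite comp_zero_l, Hdi; reflexivity).
  destruct (Huniv E _ _ Hcompat) as (d' & [Hd'i' Hd't'] & _).
  exists d'. split; [exact Hd't'|]. split; [exact Hd'i'|].
  intros W g Hgi'.
  assert (Hgt'i : comp (comp g t') i = zero A W).
  { rewrite <- comp_assoc, <- Hsq, comp_assoc, Hgi'. apply comp_zero_l. }
  destruct (Hcoker W _ Hgt'i) as (k & Hkd & Hunique).
  exists k. split.
  - apply (pushout_ext _ _ Hpo).
    + rewrite <- comp_assoc, Hd'i', comp_zero_r, Hgi'. reflexivity.
    + rewrite <- comp_assoc, Hd't'. exact Hkd.
  - intros k' Hk'. apply Hunique. rewrite <- Hd't', comp_assoc, Hk'. reflexivity.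
Qed.

Lemma pushout_kc_pair {C : AddCat} {A B X S E : C} {i : Hom C A B} {t : Hom C A X}
  {i' : Hom C X S} {t' : Hom C B S} {d : Hom C B E} :
  is_cokernel d i -> is_pushout i t i' t' -> is_a_kernel i' ->
  exists d' : Hom C S E, comp d' t' = d /\ kc_pair i' d'.
Proof.
  intros Hcoker Hpo Hker.
  destruct (pushout_cokernel Hpo Hcoker) as (d' & Hd't' & Hcoker').
  exists d'. split; [exact Hd't'|].
  split; [exact (kernel_of_its_cokernel Hker Hcoker') | exact Hcoker'].
Qed.

Definition kc_class {C : AddCat} (I D : @MorClass C) : @SeqClass C :=
  fun A B E i d => kc_pair i d /\ I A B i /\ D B E d.

Section AdmissiblePushouts.
Context {C : AddCat} (I D : @MorClass C).
Hypothesis I_kernels : forall X Y (f : Hom C X Y), I X Y f -> is_a_kernel f.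
Hypothesis I_pushouts : forall X Y X' (f : Hom C X Y) (h : Hom C X X'), I X Y f ->
  exists (P : C) (f' : Hom C X' P) (h' : Hom C Y P), is_pushout f h f' h' /\ I X' P f'.
Hypothesis D_cancel : forall A B E (a : Hom C A B) (b : Hom C B E),
  D A E (comp b a) -> has_kernel b -> D B E b.

Lemma adm_monic_pushout (A B X : C) (i : Hom C A B) (t : Hom C A X) :
  adm_monic (kc_class I D) i ->
  exists (S : C) (i' : Hom C X S) (t' : Hom C B S),
    is_pushout i t i' t' /\ adm_monic (kc_class I D) i'.
Proof.
  intros (E & d & [_ Hcoker] & Hi & Hd).
  destruct (I_pushouts _ _ _ i t Hi) as (S & i' & t' & Hpo & Hi').
  destruct (pushout_kc_pair Hcoker Hpo (I_kernels _ _ _ Hi')) as (d' & Hd't' & Hkc').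
  assert (Hd' : D S E d').
  { apply (D_cancel _ _ _ t'); [rewrite Hd't'; exact Hd | exists X, i'; exact (proj1 Hkc')]. }
  exists S, i', t'. split; [exact Hpo|].
  exists E, d'. exact (conj Hkc' (conj Hi' Hd')).
Qed.

End AdmissiblePushouts.

Definition op_class {C : AddCat} (M : @MorClass C) : @MorClass (opCat C) :=
  fun X Y f => M Y X f.

Lemma kc_pair_op {C : AddCat} {A B E : C} (i : Hom C A B) (d : Hom C B E) :
  @kc_pair (opCat C) E B A d i <-> kc_pair i d.
Proof. unfold kc_pair; simpl; tauto. Qed.

Lemma adm_epic_op {C : AddCat} (I D : @MorClass C) {B E : C} (d : Hom C B E) :
  adm_epic (kc_class I D) d <-> @adm_monic (opCat C) (kc_class (op_class D) (op_class I)) E B d.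
Proof.
  split; intros (A & i & Hkc & Hx & Hy); exists A, i;
    (split; [apply kc_pair_op; exact Hkc | split; assumption]).
Qed.

Lemma adm_epic_pullback {C : AddCat} (I D : @MorClass C)
  (D_cokernels : forall X Y (f : Hom C X Y), D X Y f -> is_a_cokernel f)
  (D_pullbacks : forall Y Z Y' (g : Hom C Y Z) (t : Hom C Y' Z), D Y Z g ->
     exists (P : C) (g' : Hom C P Y') (t' : Hom C P Y), is_pullback g t g' t' /\ D P Y' g')
  (I_cancel : forall A B E (a : Hom C A B) (b : Hom C B E),
     I A E (comp b a) -> has_cokernel a -> I A B a)
  (A X B : C) (h : Hom C A X) (t : Hom C B X) :
  adm_epic (kc_class I D) h ->
  exists (P : C) (h' : Hom C P B) (t' : Hom C P A),
    is_pullback h t h' t' /\ adm_epic (kc_class I D) h'.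
Proof.
  intros Hh. apply adm_epic_op in Hh.
  destruct (@adm_monic_pushout (opCat C) (op_class D) (op_class I)
              (fun X Y f => D_cokernels Y X f) (fun X Y X' f g => D_pullbacks Y X X' f g)
              (fun A B E a b => I_cancel E B A b a) X A B h t Hh)
    as (P & h' & t' & Hpb & Hh').
  exists P, h', t'. split; [exact Hpb | apply adm_epic_op; exact Hh'].
Qed.

Lemma kc_pair_zero {C : AddCat} : kc_pair (zero (@zobj C) zobj) (zero zobj zobj).
Proof.
  pose proof (id_kernel_of_zero (@zobj C)) as Hker.
  pose proof (zero_cokernel_of_id (@zobj C)) as Hcoker.
  rewrite zobj_id in Hker, Hcoker. split; assumption.
Qed.

Lemma kc_pair_id_zero {C : AddCat} (A : C) : kc_pair (idm A) (zero A zobj).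
Proof. split; [apply id_kernel_of_zero | apply zero_cokernel_of_id]. Qed.

Lemma kc_pair_zero_id {C : AddCat} (A : C) : kc_pair (zero zobj A) (idm A).
Proof. split; [apply zero_kernel_of_id | apply id_cokernel_of_zero]. Qed.

Theorem mainTheorem5 (C : AddCat) (D I : @MorClass C)
  (HD : left_weakly_exact D) (HI : right_weakly_exact I) :
  weakly_exact (fun (A B E : C) (i : Hom C A B) (d : Hom C B E) =>
                  kc_pair i d /\ I A B i /\ D B E d).
Proof.
  destruct HD as (D_cokernels & D_iso & D_id & D_zero & D_pullbacks & D_cancel & D_sum).
  destruct HI as (I_kernels & I_iso & I_id & I_zero & I_pushouts & I_cancel & I_sum).
  change (weakly_exact (kc_class I D)).
  refine (conj _ (conj _ (conj _ (conj _ (conj _ (conj _ (conj _ _))))))).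
  - intros A B E i d [Hkc _]. exact Hkc.
  - intros A B E A' B' E' i d i' d' (Hkc & Hi & Hd) Hiso.
    destruct (iso_seqs_arrows Hiso) as [Hii' Hdd'].
    exact (conj (kc_pair_iso Hiso Hkc)
             (conj (I_iso _ _ _ _ i i' Hi Hii') (D_iso _ _ _ _ d d' Hd Hdd'))).
  - exact (conj kc_pair_zero (conj (I_zero zobj) (D_zero zobj))).
  - intros A1 B1 E1 A2 B2 E2 i1 d1 i2 d2 (Hkc1 & Hi1 & Hd1) (Hkc2 & Hi2 & Hd2).
    exact (conj (kc_pair_dsum Hkc1 Hkc2) (conj (I_sum _ _ _ _ _ _ Hi1 Hi2) (D_sum _ _ _ _ _ _ Hd1 Hd2))).
  - intros A. exists zobj, (zero A zobj).
    exact (conj (kc_pair_id_zero A) (conj (I_id A) (D_zero A))).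
  - intros A. exists zobj, (zero zobj A).
    exact (conj (kc_pair_zero_id A) (conj (I_zero A) (D_id A))).
  - exact (adm_monic_pushout I D I_kernels I_pushouts D_cancel).
  - exact (adm_epic_pullback I D D_cokernels D_pullbacks I_cancel).
Qed.
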